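(* Let $d\geqslant1$, let $u_1,\dots,u_d\in\mathbb{Z}^d$ satisfy no nontrivial $\mathbb{Z}$-linear relation, $\mathcal{L}=\mathbb{Z}u_1+\dots+\mathbb{Z}u_d$, and let $(\mathscr{Q}_1,\mathcal{Q})$ be an ordered pair of two nonempty disjoint subsets of $\mathbb{Z}^d/\mathcal{L}$. Then: (1) $(\mathscr{Q}_1,\mathcal{Q})$ admits a minimal complement if and only if $(\bar v+\mathscr{Q}_1,\bar v+\mathcal{Q})$ admits a minimal complement for every $\bar v\in\mathbb{Z}^d/\mathcal{L}$. (2) If $\mathscr{Q}_1\cup\mathcal{Q}$ is a translate of a subgroup of $\mathbb{Z}^d/\mathcal{L}$, then $(\mathscr{Q}_1,\mathcal{Q})$ admits a minimal complement in $\mathbb{Z}^d/\mathcal{L}$. (3) If every nontrivial element of $\mathbb{Z}^d/\mathcal{L}$ has order two and either (a) each of $\mathscr{Q}_1,\mathcal{Q}$ is a singleton, or (b) the complement of $\mathscr{Q}_1\cup\mathcal{Q}$ in $\mathbb{Z}^d/\mathcal{L}$ is a singleton, then $(\mathscr{Q}_1,\mathcal{Q})$ admits a minimal complement.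
   Context: An ordered pair $(\mathscr{Q}_1,\mathcal{Q})$ of two nonempty disjoint subsets of the finite abelian group $\mathbb{Z}^d/\mathcal{L}$ admits a minimal complement in $\mathbb{Z}^d/\mathcal{L}$ if there is a nonempty $\mathcal{N}\subseteq\mathbb{Z}^d/\mathcal{L}$ with (i) $\mathcal{N}+(\mathcal{Q}\cup\mathscr{Q}_1)=\mathbb{Z}^d/\mathcal{L}$ and (ii) for every $n\in\mathcal{N}$ there is $q\in\mathscr{Q}_1$ with $n+q\neq n'+q'$ for all $n'\in\mathcal{N}\setminus\{n\}$, $q'\in\mathcal{Q}\cup\mathscr{Q}_1$. *)

(* Z^d is modelled as 'rV[int]_d; the finite group Z^d/L is
   handled through L-periodic subsets of Z^d: a subset S of Z^d/L is encoded
   by its preimage in Z^d (an L-invariant predicate), and equality in Z^d/L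
   is congruence modulo L. *)
From mathcomp Require Import all_boot all_order all_algebra.
Set Implicit Arguments. Unset Strict Implicit. Unset Printing Implicit Defensive.
Import Order.TTheory GRing.Theory Num.Theory.
Local Open Scope ring_scope.

Section Lattice.
Variables (d : nat) (u : 'I_d -> 'rV[int]_d).

Definition Zindep : Prop :=
  forall c : 'I_d -> int, \sum_i c i *: u i = 0 -> forall i, c i = 0.

Definition inL (v : 'rV[int]_d) : Prop :=
  exists c : 'I_d -> int, v = \sum_i c i *: u i.

Definition congL (v w : 'rV[int]_d) : Prop := inL (v - w).

Definition Lperiodic (P : 'rV[int]_d -> Prop) : Prop :=
  forall v w, congL v w -> P v -> P w.

Definition translate (v : 'rV[int]_d) (P : 'rV[int]_d -> Prop) :=
  fun x => P (x - v).

Definition admits_min_compl (Q1 Q : 'rV[int]_d -> Prop) : Prop :=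
  exists N : 'rV[int]_d -> Prop,
    [/\ Lperiodic N, (exists n, N n),
        (forall x, exists n q, [/\ N n, Q1 q \/ Q q & congL x (n + q)]) &
        (forall n, N n -> exists q, Q1 q /\
           forall n' q', N n' -> ~ congL n' n -> Q1 q' \/ Q q' ->
             ~ congL (n + q) (n' + q'))].

Definition Lsubgroup (H : 'rV[int]_d -> Prop) : Prop :=
  [/\ Lperiodic H, H 0 & forall x y, H x -> H y -> H (x - y)].

Definition is_singletonL (P : 'rV[int]_d -> Prop) : Prop :=
  exists a, forall x, P x <-> congL x a.

End Lattice.

From mathcomp Require Import all_boot all_order all_algebra ring.
From Stdlib Require Import Classical ClassicalEpsilon FunctionalExtensionality PropExtensionality.
Import Order.TTheory GRing.Theory Num.Theory.
Local Open Scope ring_scope.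

(* (2): pick, by choice, one representative of each coset of H.  Every x is
   r + h with r such a representative and h in H, i.e. r + q with q in v + H;
   and for a fixed q0 in Q1, r + q0 = r' + q' with q' in v + H forces
   r - r' in H, hence r = r'.
   (3a): in a group of exponent two, {a, b} = a + {0, b - a} is a coset of a
   subgroup, so (2) applies.
   (3b): if Q1 u Q misses only c, take q0 in Q1 and N = {0, t} with
   t = q0 - c: the point c is t + q0 (as -t = t), and a collision
   n + q0 = n' + q' with n <> n' in N forces q' = q0 + t = c.
   (1): a minimal complement of (Q1, Q) is one of every translate. *)

Set Implicit Arguments.

Section Lattice.
Variables (d : nat) (u : 'I_d -> 'rV[int]_d).
Implicit Types (x y z a b c e n q v w : 'rV[int]_d) (P : 'rV[int]_d -> Prop).

Local Notation inL := (inL u).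
Local Notation congL := (congL u).
Local Notation Lperiodic := (Lperiodic u).
Local Notation admits_min_compl := (admits_min_compl u).

Lemma inL0 : inL 0.
Proof. by exists (fun=> 0); rewrite big1 // => i _; rewrite scale0r. Qed.

Lemma inLD x y : inL x -> inL y -> inL (x + y).
Proof.
move=> [c ->] [c' ->]; exists (fun i => c i + c' i).
by rewrite -big_split; apply: eq_bigr => i _; rewrite scalerDl.
Qed.

Lemma inLN x : inL x -> inL (- x).
Proof.
move=> [c ->]; exists (fun i => - c i).
by rewrite -sumrN; apply: eq_bigr => i _; rewrite scaleNr.
Qed.

Lemma congL_refl x : congL x x.
Proof. by rewrite /congL subrr; apply: inL0. Qed.

Lemma congL_sym x y : congL x y -> congL y x.
Proof. by move=> /inLN; rewrite opprB. Qed.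

Lemma congLD a b c e : congL a b -> congL c e -> congL (a + c) (b + e).
Proof.
by move=> hab hce; rewrite /congL opprD addrACA; apply: inLD.
Qed.

Lemma congLN a b : congL a b -> congL (- a) (- b).
Proof. by rewrite /congL -opprD; apply: inLN. Qed.

Lemma congLB a b c e : congL a b -> congL c e -> congL (a - c) (b - e).
Proof. by move=> hab /congLN; apply: congLD. Qed.

Lemma congL_trans x y z : congL x y -> congL y z -> congL x z.
Proof. by move=> hxy hyz; have := congLD hxy hyz; rewrite /congL addrKA. Qed.

Lemma congL_periodic x : Lperiodic (congL^~ x).
Proof. by move=> y z /congL_sym; apply: congL_trans. Qed.

Definition pairL a b y := congL y a \/ congL y b.

Lemma pairL_periodic a b : Lperiodic (pairL a b).
Proof. by move=> x y xy [xa|xb]; [left|right]; apply: congL_periodic xy _. Qed.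

Lemma translate0 P : translate 0 P = P.
Proof. by apply: functional_extensionality => x; rewrite /translate subr0. Qed.

Lemma admits_min_compl_translate Q1 Q v :
  admits_min_compl Q1 Q -> admits_min_compl (translate v Q1) (translate v Q).
Proof.
move=> [N [perN [n0 Nn0] cover unique]]; exists N; split => //; first by exists n0.
  move=> x; have [n [q [Nn Qq xnq]]] := cover (x - v).
  exists n, (q + v); split; rewrite /translate ?addrK //.
  by have := congLD xnq (congL_refl v); rewrite subrK addrA.
move=> n Nn; have [q [Q1q uniq_q]] := unique n Nn.
exists (q + v); split; first by rewrite /translate addrK.
move=> n' q' Nn' n'n Qq' nq; apply: (uniq_q n' (q' - v)) => //.
by have := congLB nq (congL_refl v); rewrite addrA addrK addrA.
Qed.

Section Subgroup.
Variable H : 'rV[int]_d -> Prop.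
Hypothesis subH : Lsubgroup u H.

Lemma subgroupN x : H x -> H (- x).
Proof. by case: subH => _ H0 HB Hx; rewrite -sub0r; apply: HB. Qed.

Lemma subgroupD x y : H x -> H y -> H (x + y).
Proof. by case: subH => _ _ HB Hx /subgroupN Hy; rewrite -[y]opprK; apply: HB. Qed.

Lemma subgroup_inL x : inL x -> H x.
Proof.
case: subH => perH H0 _ Lx; apply: (perH 0) => //.
by rewrite /congL sub0r; apply: inLN.
Qed.

Definition coset_repr x := epsilon (inhabits 0) (fun y => H (y - x)).

Lemma coset_reprP x : H (coset_repr x - x).
Proof.
apply: (epsilon_spec (inhabits 0) (fun y => H (y - x))).
by exists x; rewrite subrr; case: subH.
Qed.

Lemma coset_repr_eq x y : H (x - y) -> coset_repr x = coset_repr y.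
Proof.
move=> Hxy; congr epsilon; apply: functional_extensionality => z.
apply: propositional_extensionality; split => Hz.
  by have := subgroupD Hz Hxy; rewrite addrA subrK.
by have := subgroupD Hz (subgroupN Hxy); rewrite opprB addrA subrK.
Qed.

Definition transversal y := congL y (coset_repr y).

Lemma transversal_periodic : Lperiodic transversal.
Proof.
move=> x y xy Tx; rewrite /transversal -(@coset_repr_eq x y).
  exact: congL_trans (congL_sym xy) Tx.
exact: subgroup_inL.
Qed.

Lemma transversal_coset_repr x : transversal (coset_repr x).
Proof.
rewrite /transversal (@coset_repr_eq (coset_repr x) x); last exact: coset_reprP.
exact: congL_refl.
Qed.

Lemma transversal_uniq n n' :
  transversal n -> transversal n' -> H (n - n') -> congL n n'.
Proof.
move=> Tn Tn' /coset_repr_eq e; apply: congL_trans Tn _.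
by rewrite e; apply: congL_sym.
Qed.

Lemma admits_min_compl_subgroup_coset Q1 Q v :
  (exists q, Q1 q) -> (forall x, Q1 x \/ Q x <-> H (x - v)) ->
  admits_min_compl Q1 Q.
Proof.
move=> [q0 Q1q0] QH; exists transversal; split.
- exact: transversal_periodic.
- by exists (coset_repr 0); apply: transversal_coset_repr.
- move=> x; exists (coset_repr (x - v)), (x - coset_repr (x - v)); split.
  + exact: transversal_coset_repr.
  + by apply/(QH _); rewrite addrAC -opprB; apply/subgroupN/coset_reprP.
  + by rewrite subrKC; apply: congL_refl.
- move=> n Tn; exists q0; split=> // n' q' Tn' n'n Qq' nq; apply: n'n.
  apply: congL_sym; apply: transversal_uniq => //.
  have Hq : H (q0 - q').
    have := subgroupD ((QH q0).1 (or_introl Q1q0)) (subgroupN ((QH q').1 Qq')).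
    by rewrite opprB addrA subrK.
  have := subgroupD (subgroup_inL nq) (subgroupN Hq).
  by rewrite (_ : _ + _ = n - n') //; apply/rowP => i; rewrite !mxE; ring.
Qed.
End Subgroup.

Lemma inL_mulr2n : (forall x, ~ inL x -> inL (x *+ 2)) -> forall x, inL (x *+ 2).
Proof.
move=> nonL_double x; have [Lx | /nonL_double //] := classic (inL x).
by rewrite mulr2n; apply: inLD.
Qed.

Section ExponentTwo.
Hypothesis inL_double : forall x, inL (x *+ 2).

Lemma congL_oppr x : congL (- x) x.
Proof. by rewrite /congL -opprD -mulr2n; apply: inLN. Qed.

Lemma pairL_subgroup w : Lsubgroup u (pairL 0 w).
Proof.
split; [exact: pairL_periodic | by left; apply: congL_refl |].
move=> x y [x0|xw] [y0|yw]; [left|right|right|left].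
- by have := congLB x0 y0; rewrite subr0.
- by have := congLB x0 yw; rewrite sub0r => /congL_trans; apply; apply: congL_oppr.
- by have := congLB xw y0; rewrite subr0.
- by have := congLB xw yw; rewrite subrr.
Qed.

Lemma pairL_subr n n' t :
  pairL 0 t n -> pairL 0 t n' -> ~ congL n' n -> congL (n - n') (- t).
Proof.
move=> [n0|nt] [n'0|n't] n'n.
- by case: n'n; apply: congL_trans n'0 (congL_sym n0).
- by have := congLB n0 n't; rewrite sub0r.
- have := congLB nt n'0; rewrite subr0 => /congL_trans; apply.
  exact/congL_sym/congL_oppr.
- by case: n'n; apply: congL_trans n't (congL_sym nt).
Qed.

Lemma admits_min_compl_singletons Q1 Q :
  is_singletonL u Q1 -> is_singletonL u Q -> admits_min_compl Q1 Q.
Proof.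
move=> [a Q1a] [b Qb].
apply: (admits_min_compl_subgroup_coset (pairL_subgroup (b - a)) Q1 Q a).
  by exists a; apply/Q1a; apply: congL_refl.
move=> x; rewrite /pairL Q1a Qb /congL subr0 opprB subrKA.
by split.
Qed.

Lemma admits_min_compl_cosingleton Q1 Q :
  Lperiodic Q1 -> (exists q, Q1 q) -> is_singletonL u (fun x => ~ (Q1 x \/ Q x)) ->
  admits_min_compl Q1 Q.
Proof.
move=> perQ1 [q0 Q1q0] [c Qc].
have QQ1 x : ~ congL x c -> Q1 x \/ Q x by move=> xc; apply: NNPP => /Qc.
pose t := q0 - c.
exists (pairL 0 t); split.
- exact: pairL_periodic.
- by exists 0; left; apply: congL_refl.
- move=> x; have [xc | xc] := classic (congL x c); last first.
    exists 0, x; split; [by left; apply: congL_refl | exact: QQ1 |].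
    by rewrite add0r; apply: congL_refl.
  exists t, (x - t); split; first by right; apply: congL_refl.
    left; apply: (perQ1 q0) => //; apply: congL_sym.
    by have := congLD xc (congL_oppr t); rewrite subrKC.
  by rewrite subrKC; apply: congL_refl.
- move=> n Nn; exists q0; split=> // n' q' Nn' n'n Qq' nq.
  suff /Qc : congL q' c by [].
  have := congLB (congL_sym nq) (congL_refl n'); rewrite addrC addKr addrAC.
  move=> /congL_trans; apply.
  by have := congLD (pairL_subr Nn Nn' n'n) (congL_refl q0); rewrite opprB subrK.
Qed.
End ExponentTwo.
End Lattice.

Theorem lemma4p20 (d : nat) (u : 'I_d -> 'rV[int]_d) (Q1 Q : 'rV[int]_d -> Prop) :
  (1 <= d)%N -> Zindep u ->
  Lperiodic u Q1 -> Lperiodic u Q ->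
  (exists x, Q1 x) -> (exists x, Q x) ->
  (forall x, Q1 x -> Q x -> False) ->
  [/\ (admits_min_compl u Q1 Q <->
        forall v, admits_min_compl u (translate v Q1) (translate v Q)),
      ((exists (v : 'rV[int]_d) (H : 'rV[int]_d -> Prop),
          Lsubgroup u H /\ forall x, (Q1 x \/ Q x) <-> H (x - v)) ->
        admits_min_compl u Q1 Q) &
      ((forall x, ~ inL u x -> inL u (x *+ 2)) ->
       ((is_singletonL u Q1 /\ is_singletonL u Q) \/
        is_singletonL u (fun x => ~ (Q1 x \/ Q x))) ->
       admits_min_compl u Q1 Q)].
Proof.
move=> _ _ perQ1 _ exQ1 _ _; split.
- split=> [h v | /(_ 0)]; first exact: admits_min_compl_translate.
  by rewrite !translate0.
- move=> [v [H [subH QH]]].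
  exact: (admits_min_compl_subgroup_coset subH Q1 Q v exQ1 QH).
- move=> /inL_mulr2n inL_double [[sQ1 sQ] | sQ'].
  + exact: admits_min_compl_singletons.
  + exact: admits_min_compl_cosingleton.
Qed.
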